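(* Let $(a_j)_{j=0}^\infty$ be a sequence of complex numbers with $|a_j|=1$ for all $j \ge 0$, and for each $n=0,1,2,\ldots$ let $P_n(z)=\sum_{j=0}^n a_j z^j$. Then $(P_n)_{n=0}^\infty$ is not an ultraflat sequence of unimodular polynomials; that is, there is no sequence $(\varepsilon_n)$ of positive real numbers with $\varepsilon_n\to 0$ such that $$(1-\varepsilon_n)\sqrt{n+1} \le |P_n(e^{it})| \le (1+\varepsilon_n)\sqrt{n+1} \quad \text{for all } t\in\mathbb{R} \text{ and all } n\ge 0.$$
   Context: For $n\ge 0$, $\mathcal{K}_n$ denotes the set of polynomials $Q_n(z)=\sum_{k=0}^n a_k z^k$ with $a_k\in\mathbb{C}$, $|a_k|=1$ (complex unimodular polynomials of degree $n$). Given $\varepsilon>0$, a polynomial $P_n\in\mathcal{K}_n$ is $\varepsilon$-flat if $(1-\varepsilon)\sqrt{n+1}\le |P_n(e^{it})|\le (1+\varepsilon)\sqrt{n+1}$ for all real $t$. A sequence $(P_n)$ with $P_n\in\mathcal{K}_n$ is ultraflat if there is a sequence $(\varepsilon_n)$ of positive numbers converging to $0$ such that each $P_n$ is $\varepsilon_n$-flat. *)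

From Stdlib Require Import Reals.
From Coquelicot Require Import Coquelicot.
Open Scope R_scope.

Definition expi (t : R) : C := (cos t, sin t).

Definition partial_poly (a : nat -> C) (n : nat) (z : C) : C :=
  sum_n (fun j => Cmult (a j) (Cpow z j)) n.

Definition eps_flat (n : nat) (P : C -> C) (eps : R) : Prop :=
  forall t : R,
    (1 - eps) * sqrt (INR (n + 1)) <= Cmod (P (expi t)) /\
    Cmod (P (expi t)) <= (1 + eps) * sqrt (INR (n + 1)).

Definition ultraflat (P : nat -> C -> C) : Prop :=
  exists eps : nat -> R,
    (forall n, 0 < eps n) /\ is_lim_seq eps 0 /\
    forall n, eps_flat n (P n) (eps n).

(* Write P = P_n and let Q(z) = z^n conj(P(1/conj z)) be its conjugate reciprocal, so that
   |Q| = |P| on the unit circle.  The coefficients of PQ are the aperiodic autocorrelations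
   c_k(n) = sum_j a_j conj(a_(j-k)) of (a_0, ..., a_n), and PQ = z^n |P|^2 on the circle, so
   discrete Parseval at the (2n+1)-st roots of unity gives
   (n+1)^2 + sum_(k>=1) |c_k(n)|^2 <= max |P|^4; for an eps-flat P_n the sidelobe energy
   E_n = sum_(k>=1) |c_k(n)|^2 is therefore at most ((1+eps)^4 - 1) (n+1)^2 = o(n^2).
   Now take F(z) = sum_j (2j - n) a_j z^j = 2 z P'(z) - n P(z).  Parseval and the lower
   flatness bound give sum |coef(FQ)|^2 >= (1-eps)^2 (n+1) n (n+1) (n+2) / 3 ~ n^4 / 3.
   But the weights 2j - n are affine in j, so Abel summation writes every coefficient of FQ
   through the autocorrelations c_k(m), m <= n, of the earlier partial sums; Cauchy-Schwarz
   then gives sum |coef(FQ)|^2 <= 4 n^2 E_n + 16 n sum_(m<n) E_m = o(n^4). *)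

From Stdlib Require Import Reals Lra Lia.
From Coquelicot Require Import Coquelicot.
Open Scope R_scope.

(** * Finite sums *)

(* Coquelicot's [sum_n] lemmas are stated with the abstract [plus] of [AbelianMonoid] and do
   not rewrite terms built from [Cplus] or [Rplus], hence these concrete sums.  Note that
   [csum n f] has the [n] terms [f 0, ..., f (n-1)], whereas [sum_n f n] has [n + 1]. *)
Fixpoint csum (n : nat) (f : nat -> C) : C :=
  match n with O => RtoC 0 | S k => (csum k f + f k)%C end.

Fixpoint rsum (n : nat) (f : nat -> R) : R :=
  match n with O => 0 | S k => rsum k f + f k end.

Lemma csum_S n f : csum (S n) f = (csum n f + f n)%C.
Proof. reflexivity. Qed.

Lemma rsum_S n f : rsum (S n) f = rsum n f + f n.
Proof. reflexivity. Qed.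

Lemma csum_ext n f g : (forall i, (i < n)%nat -> f i = g i) -> csum n f = csum n g.
Proof.
  induction n as [|n IH]; intros H; simpl; auto.
  rewrite IH by (intros; apply H; lia). rewrite H by lia. reflexivity.
Qed.

Lemma rsum_ext n f g : (forall i, (i < n)%nat -> f i = g i) -> rsum n f = rsum n g.
Proof.
  induction n as [|n IH]; intros H; simpl; auto.
  rewrite IH by (intros; apply H; lia). rewrite H by lia. reflexivity.
Qed.

Lemma rsum_le n f g : (forall i, (i < n)%nat -> f i <= g i) -> rsum n f <= rsum n g.
Proof.
  induction n as [|n IH]; intros H; simpl; [lra|].
  apply Rplus_le_compat; [apply IH; intros; apply H|apply H]; lia.
Qed.

Lemma rsum_const n c : rsum n (fun _ => c) = INR n * c.
Proof. induction n as [|n IH]; simpl rsum; [simpl; ring|rewrite IH, S_INR; ring]. Qed.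

Lemma rsum_ge0 n f : (forall i, (i < n)%nat -> 0 <= f i) -> 0 <= rsum n f.
Proof.
  intros H. rewrite <- (Rmult_0_r (INR n)), <- rsum_const. now apply rsum_le.
Qed.

Lemma csum_eq0 n f : (forall i, (i < n)%nat -> f i = RtoC 0) -> csum n f = RtoC 0.
Proof.
  induction n as [|n IH]; intros H; simpl; auto.
  rewrite IH by (intros; apply H; lia). rewrite H by lia. apply Cplus_0_r.
Qed.

Lemma csum_add n f g : csum n (fun i => f i + g i)%C = (csum n f + csum n g)%C.
Proof. induction n as [|n IH]; simpl; [now rewrite Cplus_0_r|rewrite IH; ring]. Qed.

Lemma rsum_add n f g : rsum n (fun i => f i + g i) = rsum n f + rsum n g.
Proof. induction n as [|n IH]; simpl; [ring|rewrite IH; ring]. Qed.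

Lemma csum_mul_l n c f : csum n (fun i => c * f i)%C = (c * csum n f)%C.
Proof. induction n as [|n IH]; simpl; [now rewrite Cmult_0_r|rewrite IH; ring]. Qed.

Lemma rsum_mul_l n c f : rsum n (fun i => c * f i) = c * rsum n f.
Proof. induction n as [|n IH]; simpl; [ring|rewrite IH; ring]. Qed.

Lemma csum_split m n f : csum (m + n) f = (csum m f + csum n (fun i => f (m + i)%nat))%C.
Proof.
  induction n as [|n IH]; simpl; [now rewrite Nat.add_0_r, Cplus_0_r|].
  rewrite Nat.add_succ_r; simpl. rewrite IH; ring.
Qed.

Lemma rsum_split m n f : rsum (m + n) f = rsum m f + rsum n (fun i => f (m + i)%nat).
Proof.
  induction n as [|n IH]; simpl; [now rewrite Nat.add_0_r, Rplus_0_r|].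
  rewrite Nat.add_succ_r; simpl. rewrite IH; ring.
Qed.

Lemma csum_tail m n f : (m <= n)%nat -> (forall i, (m <= i)%nat -> f i = RtoC 0) ->
  csum n f = csum m f.
Proof.
  intros Hmn Hf. replace n with (m + (n - m))%nat by lia.
  rewrite csum_split, (csum_eq0 (n - m)); [apply Cplus_0_r|]. intros; apply Hf; lia.
Qed.

Lemma rsum_tail m n f : (m <= n)%nat -> (forall i, (m <= i)%nat -> f i = 0) ->
  rsum n f = rsum m f.
Proof.
  intros Hmn Hf. replace n with (m + (n - m))%nat by lia.
  rewrite rsum_split, (rsum_ext (n - m) _ (fun _ => 0)), rsum_const; [ring|].
  intros; apply Hf; lia.
Qed.

Lemma csum_reflect n f : csum n f = csum n (fun i => f (n - S i)%nat).
Proof.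
  revert f; induction n as [|n IH]; intros f; auto.
  change (S n) with (1 + n)%nat at 1. rewrite csum_split, IH; simpl.
  rewrite Nat.sub_diag, Cplus_0_l, Cplus_comm. f_equal.
  apply csum_ext; intros i Hi. f_equal; lia.
Qed.

Lemma rsum_reflect n f : rsum n f = rsum n (fun i => f (n - S i)%nat).
Proof.
  revert f; induction n as [|n IH]; intros f; auto.
  change (S n) with (1 + n)%nat at 1. rewrite rsum_split, IH; simpl.
  rewrite Nat.sub_diag, Rplus_0_l, Rplus_comm. f_equal.
  apply rsum_ext; intros i Hi. f_equal; lia.
Qed.

Lemma csum_swap m n (f : nat -> nat -> C) :
  csum m (fun i => csum n (f i)) = csum n (fun j => csum m (fun i => f i j)).
Proof.
  induction m as [|m IH]; simpl.
  - symmetry; now apply csum_eq0.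
  - now rewrite IH, <- csum_add.
Qed.

Lemma rsum_swap m n (f : nat -> nat -> R) :
  rsum m (fun i => rsum n (f i)) = rsum n (fun j => rsum m (fun i => f i j)).
Proof.
  induction m as [|m IH]; simpl.
  - rewrite rsum_const; ring.
  - now rewrite IH, <- rsum_add.
Qed.

Lemma csum_mul m n f g :
  (csum m f * csum n g)%C = csum m (fun i => csum n (fun j => f i * g j))%C.
Proof.
  rewrite Cmult_comm, <- csum_mul_l. apply csum_ext; intros i _.
  rewrite Cmult_comm, <- csum_mul_l. apply csum_ext; intros; ring.
Qed.

Lemma Cconj_R (r : R) : Cconj (RtoC r) = RtoC r.
Proof. apply injective_projections; simpl; ring. Qed.

Lemma csum_conj n f : Cconj (csum n f) = csum n (fun i => Cconj (f i)).
Proof.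
  induction n as [|n IH]; simpl; [apply Cconj_R|].
  now rewrite Cplus_conj, IH.
Qed.

Lemma Re_csum n f : Re (csum n f) = rsum n (fun i => Re (f i)).
Proof. induction n as [|n IH]; simpl; auto. now rewrite <- IH. Qed.

Lemma csum_kronecker n k (g : nat -> C) : (k < n)%nat ->
  csum n (fun i => if Nat.eqb k i then g i else RtoC 0) = g k.
Proof.
  induction n as [|n IH]; intros Hk; [lia|simpl].
  destruct (Nat.eqb_spec k n) as [<-|Hkn].
  - rewrite csum_eq0; [apply Cplus_0_l|].
    intros i Hi. destruct (Nat.eqb_spec k i); [lia|reflexivity].
  - rewrite IH by lia. apply Cplus_0_r.
Qed.

Lemma csum_triangle n (h : nat -> nat -> C) :
  csum n (fun l => csum (S l) (fun i => h i l)) =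
  csum n (fun i => csum (n - i) (fun j => h i (i + j)%nat)).
Proof.
  induction n as [|n IH]; [reflexivity|].
  transitivity (csum (S n) (fun i => csum (n - i) (fun j => h i (i + j)%nat) + h i n))%C.
  - rewrite csum_add, csum_S, IH, (csum_S n (fun i => csum (n - i) _)), Nat.sub_diag.
    simpl. ring.
  - apply csum_ext; intros i Hi.
    replace (S n - i)%nat with (S (n - i)) by lia.
    rewrite csum_S. do 3 f_equal. lia.
Qed.

Lemma Cmod_csum_le n f : Cmod (csum n f) <= rsum n (fun i => Cmod (f i)).
Proof.
  induction n as [|n IH]; simpl; [rewrite Cmod_0; lra|].
  eapply Rle_trans; [apply Cmod_triangle|lra].
Qed.

Lemma rsum_sqr_le n f : (rsum n f) ^ 2 <= INR n * rsum n (fun i => f i ^ 2).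
Proof.
  set (A := rsum n f).
  assert (Hvar : 0 <= rsum n (fun i => (INR n * f i - A) ^ 2))
    by (apply rsum_ge0; intros; apply pow2_ge_0).
  rewrite (rsum_ext n _ (fun i => INR n ^ 2 * f i ^ 2 + (- 2 * INR n * A * f i + A ^ 2)))
    in Hvar by (intros; ring).
  rewrite rsum_add, rsum_add, !rsum_mul_l, rsum_const in Hvar. fold A in Hvar.
  destruct (Nat.eq_dec n 0) as [->|Hn]; [simpl in *; unfold A; simpl; lra|].
  assert (0 < INR n) by (apply lt_0_INR; lia).
  apply Rmult_le_reg_l with (INR n); nra.
Qed.

Lemma Cmod_add_sqr_le x y : Cmod (x + y) ^ 2 <= 2 * Cmod x ^ 2 + 2 * Cmod y ^ 2.
Proof.
  assert (Hxy : Cmod (x + y) ^ 2 <= (Cmod x + Cmod y) ^ 2)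
    by (apply pow_incr; split; [apply Cmod_ge_0|apply Cmod_triangle]).
  assert (0 <= (Cmod x - Cmod y) ^ 2) by apply pow2_ge_0. nra.
Qed.

Lemma Cmod_csum_sqr_le n Y :
  Cmod (csum n Y) ^ 2 <= INR n * rsum n (fun m => Cmod (Y m) ^ 2).
Proof.
  eapply Rle_trans; [|apply rsum_sqr_le].
  apply pow_incr. split; [apply Cmod_ge_0|apply Cmod_csum_le].
Qed.

Lemma Cmod_sqr_RtoC_mul (g : R) z : Cmod (RtoC g * z) ^ 2 = g ^ 2 * Cmod z ^ 2.
Proof. now rewrite Cmod_mult, Cmod_R, Rpow_mult_distr, pow2_abs. Qed.

Lemma csum_RtoC n f : csum n (fun i => RtoC (f i)) = RtoC (rsum n f).
Proof. induction n as [|n IH]; simpl; [reflexivity|]. now rewrite IH, RtoC_plus. Qed.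

Lemma rsum_split_mid n d :
  rsum (S (n + n)) d = rsum n d + d n + rsum n (fun k => d (n + S k)%nat).
Proof.
  replace (S (n + n)) with (S n + n)%nat by lia.
  rewrite rsum_split, rsum_S. f_equal. apply rsum_ext; intros k _. f_equal; lia.
Qed.

Lemma rsum_INR n : rsum n INR = INR n * (INR n - 1) / 2.
Proof. induction n as [|n IH]; [simpl; field|]. rewrite rsum_S, IH, S_INR. field. Qed.

Lemma rsum_INR_sqr n : rsum n (fun i => INR i ^ 2) = INR n * (INR n - 1) * (2 * INR n - 1) / 6.
Proof. induction n as [|n IH]; [simpl; field|]. rewrite rsum_S, IH, S_INR. field. Qed.

(** * Roots of unity and discrete Parseval *)

Lemma expi_add s t : (expi s * expi t)%C = expi (s + t).
Proof.
  unfold expi. apply injective_projections; simpl;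
    [rewrite cos_plus|rewrite sin_plus]; ring.
Qed.

Lemma expi_pow t k : (expi t ^ k)%C = expi (INR k * t).
Proof.
  induction k as [|k IH].
  - unfold expi. simpl. rewrite Rmult_0_l, cos_0, sin_0. reflexivity.
  - rewrite Cpow_S, IH, expi_add, S_INR. f_equal; ring.
Qed.

Lemma expi_conj t : Cconj (expi t) = expi (- t).
Proof. unfold expi, Cconj; simpl. now rewrite cos_neg, sin_neg. Qed.

Lemma Cmod_expi t : Cmod (expi t) = 1.
Proof.
  unfold Cmod, expi; simpl fst; simpl snd.
  replace (cos t ^ 2 + sin t ^ 2) with 1 by (rewrite <- (sin2_cos2 t); unfold Rsqr; ring).
  apply sqrt_1.
Qed.

Lemma expi_2PI_mult k : expi (2 * PI * INR k) = RtoC 1.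
Proof.
  unfold expi. replace (2 * PI * INR k) with (0 + 2 * INR k * PI) by ring.
  now rewrite cos_period, sin_period, cos_0, sin_0.
Qed.

(* [cos t = 1] forces [sin (t/2) = 0], and [t/2] lies in [(-PI, PI)]. *)
Lemma expi_eq_1 t : - (2 * PI) < t < 2 * PI -> expi t = RtoC 1 -> t = 0.
Proof.
  intros Ht Hexp. assert (Hcos : cos t = 1) by exact (f_equal fst Hexp).
  replace t with (2 * (t / 2)) in Hcos by field.
  rewrite cos_2a_sin in Hcos.
  assert (Hsin : sin (t / 2) = 0) by nra.
  destruct (Rtotal_order t 0) as [Hlt|[Heq|Hgt]]; auto.
  - assert (0 < sin (- (t / 2))) by (apply sin_gt_0; lra).
    rewrite sin_neg in *. lra.
  - assert (0 < sin (t / 2)) by (apply sin_gt_0; lra). lra.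
Qed.

Lemma csum_geom q n : ((1 - q) * csum n (fun s => q ^ s))%C = (1 - q ^ n)%C.
Proof.
  induction n as [|n IH].
  - simpl. apply injective_projections; simpl; ring.
  - rewrite csum_S, Cmult_plus_distr_l, IH, Cpow_S. ring.
Qed.

Lemma csum_pow_root_of_unity q N : q <> RtoC 1 -> (q ^ N)%C = RtoC 1 ->
  csum N (fun s => q ^ s)%C = RtoC 0.
Proof.
  intros Hq HqN.
  assert (Hq' : (1 - q)%C <> RtoC 0) by (intros H; apply Hq; symmetry; apply Ceq_minus, H).
  transitivity (/ (1 - q) * ((1 - q) * csum N (fun s => q ^ s)))%C.
  - rewrite Cmult_assoc, Cinv_l by exact Hq'. ring.
  - rewrite csum_geom, HqN. ring.
Qed.

Definition unity_root (N s : nat) : C := expi (2 * PI * INR s / INR N).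

Lemma unity_root_orthogonal N l l' : (l < N)%nat -> (l' < N)%nat ->
  csum N (fun s => unity_root N s ^ l * Cconj (unity_root N s ^ l'))%C =
  if Nat.eqb l l' then RtoC (INR N) else RtoC 0.
Proof.
  intros Hl Hl'. assert (HN : 0 < INR N) by (apply lt_0_INR; lia).
  set (t := 2 * PI * (INR l - INR l') / INR N).
  rewrite (csum_ext N _ (fun s => expi t ^ s))%C.
  2:{ intros s _. unfold unity_root. rewrite !expi_pow, expi_conj, expi_add.
      f_equal. unfold t. field. lra. }
  destruct (Nat.eqb_spec l l') as [<-|Hll'].
  - unfold t. rewrite Rminus_diag, Rmult_0_r, Rdiv_0_l.
    replace (expi 0) with (RtoC 1)
      by (unfold expi; now rewrite cos_0, sin_0).
    clear. induction N as [|N IH]; [reflexivity|].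
    rewrite csum_S, IH, Cpow_1_l, S_INR. apply injective_projections; simpl; ring.
  - assert (Hpi := PI_RGT_0).
    assert (INR l < INR N) by (apply lt_INR; lia).
    assert (INR l' < INR N) by (apply lt_INR; lia).
    assert (0 <= INR l) by apply pos_INR. assert (0 <= INR l') by apply pos_INR.
    apply csum_pow_root_of_unity.
    + intros Hexp. apply expi_eq_1 in Hexp.
      * apply Hll', INR_eq.
        assert (Hdiff : INR l - INR l' = t * (INR N / (2 * PI))) by (unfold t; field; lra).
        rewrite Hexp, Rmult_0_l in Hdiff. lra.
      * unfold t. split; apply Rmult_lt_reg_r with (INR N); auto; field_simplify; nra.
    + rewrite expi_pow.
      replace (INR N * t) with (2 * PI * INR l + - (2 * PI * INR l')) by (unfold t; field; lra).
      rewrite <- expi_add, <- expi_conj, !expi_2PI_mult, Cconj_R. apply Cmult_1_l.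
Qed.

Lemma Cmod_sqr_Re z : Cmod z ^ 2 = Re (z * Cconj z).
Proof. now rewrite <- Cmod2_conj. Qed.

Lemma discrete_parseval N c :
  rsum N (fun s => Cmod (csum N (fun l => c l * unity_root N s ^ l)%C) ^ 2) =
  INR N * rsum N (fun l => Cmod (c l) ^ 2).
Proof.
  rewrite (rsum_ext N _ (fun s => Re (csum N (fun l => csum N (fun l' =>
             c l * Cconj (c l') * (unity_root N s ^ l * Cconj (unity_root N s ^ l')))))))%C.
  2:{ intros s _. rewrite Cmod_sqr_Re, csum_conj, csum_mul. f_equal.
      apply csum_ext; intros l _. apply csum_ext; intros l' _.
      rewrite Cmult_conj. ring. }
  rewrite <- Re_csum, csum_swap.
  rewrite (csum_ext N _ (fun l => c l * Cconj (c l) * RtoC (INR N)))%C.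
  - rewrite Re_csum, <- rsum_mul_l. apply rsum_ext; intros l _.
    rewrite Cmod_sqr_Re. destruct (c l); simpl; ring.
  - intros l Hl. rewrite csum_swap.
    rewrite (csum_ext N _ (fun l' =>
               if Nat.eqb l l' then c l * Cconj (c l') * RtoC (INR N) else RtoC 0))%C.
    + exact (csum_kronecker N l (fun l' => c l * Cconj (c l') * RtoC (INR N))%C Hl).
    + intros l' Hl'. rewrite csum_mul_l, unity_root_orthogonal by auto.
      destruct (Nat.eqb l l'); [reflexivity|apply Cmult_0_r].
Qed.

(** * Products of polynomials *)

Lemma partial_poly_csum c n z :
  partial_poly c n z = csum (S n) (fun j => c j * z ^ j)%C.
Proof.
  unfold partial_poly. induction n as [|n IH].
  - rewrite sum_O. symmetry. apply Cplus_0_l.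
  - rewrite sum_Sn, IH. reflexivity.
Qed.

Lemma partial_poly_parseval u n N : (n < N)%nat ->
  (forall i, (n < i)%nat -> u i = RtoC 0) ->
  rsum N (fun s => Cmod (partial_poly u n (unity_root N s)) ^ 2) =
  INR N * rsum (S n) (fun l => Cmod (u l) ^ 2).
Proof.
  intros HnN Hu.
  rewrite <- (rsum_tail (S n) N) by (lia || (intros l Hl; rewrite Hu, Cmod_0 by lia; ring)).
  rewrite <- discrete_parseval. apply rsum_ext; intros s _.
  rewrite partial_poly_csum, <- (csum_tail (S n) N); [reflexivity|lia|].
  intros l Hl. rewrite Hu by lia. apply Cmult_0_l.
Qed.

Definition conv (u v : nat -> C) (l : nat) : C :=
  csum (S l) (fun i => u i * v (l - i)%nat)%C.

Section Product.
Variables (u v : nat -> C) (n : nat).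
Hypothesis u_above : forall i, (n < i)%nat -> u i = RtoC 0.
Hypothesis v_above : forall i, (n < i)%nat -> v i = RtoC 0.

Lemma conv_above l : (n + n < l)%nat -> conv u v l = RtoC 0.
Proof.
  intros Hl. apply csum_eq0; intros i Hi.
  destruct (Nat.le_gt_cases i n).
  - rewrite v_above by lia. apply Cmult_0_r.
  - rewrite u_above by lia. apply Cmult_0_l.
Qed.

Lemma partial_poly_mul z :
  (partial_poly u n z * partial_poly v n z)%C = partial_poly (conv u v) (n + n) z.
Proof.
  rewrite !partial_poly_csum. unfold conv.
  rewrite (csum_ext (S (n + n)) _
             (fun l => csum (S l) (fun i => u i * v (l - i)%nat * z ^ l)))%C
    by (intros; rewrite Cmult_comm, <- csum_mul_l; apply csum_ext; intros; ring).
  rewrite csum_triangle.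
  rewrite (csum_ext (S (n + n)) _
             (fun i => u i * z ^ i * csum (S n) (fun j => v j * z ^ j)))%C.
  - rewrite (csum_tail (S n) (S (n + n))) by (lia || (intros i Hi; rewrite u_above by lia; ring)).
    rewrite Cmult_comm, <- csum_mul_l. apply csum_ext; intros; ring.
  - intros i Hi. destruct (Nat.le_gt_cases i n) as [Hin|Hin].
    + rewrite <- csum_mul_l, (csum_tail (S n) (S (n + n) - i)) by
        (lia || (intros j Hj; rewrite Nat.add_comm, Nat.add_sub, v_above by lia; ring)).
      apply csum_ext; intros j _.
      rewrite Nat.add_comm, Nat.add_sub, Cpow_add_r. ring.
    + rewrite (u_above i Hin), csum_eq0; [ring|]. intros j _. ring.
Qed.

Lemma conv_energy :
  INR (S (n + n)) * rsum (S (n + n)) (fun l => Cmod (conv u v l) ^ 2) =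
  rsum (S (n + n)) (fun s =>
    (Cmod (partial_poly u n (unity_root (S (n + n)) s)) *
     Cmod (partial_poly v n (unity_root (S (n + n)) s))) ^ 2).
Proof.
  rewrite <- partial_poly_parseval by (lia || apply conv_above).
  apply rsum_ext; intros s _. now rewrite <- Cmod_mult, partial_poly_mul.
Qed.

End Product.

Definition trunc n (c : nat -> C) (j : nat) : C :=
  if (j <=? n)%nat then c j else RtoC 0.

(* Coefficients of the conjugate reciprocal z^n conj(P(1/conj z)) of P of degree n. *)
Definition recip n (c : nat -> C) (j : nat) : C :=
  if (j <=? n)%nat then Cconj (c (n - j)%nat) else RtoC 0.

Lemma trunc_above n c i : (n < i)%nat -> trunc n c i = RtoC 0.
Proof. intros H. unfold trunc. destruct (Nat.leb_spec i n); [lia|reflexivity]. Qed.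

Lemma recip_above n c i : (n < i)%nat -> recip n c i = RtoC 0.
Proof. intros H. unfold recip. destruct (Nat.leb_spec i n); [lia|reflexivity]. Qed.

Lemma partial_poly_trunc n c z : partial_poly (trunc n c) n z = partial_poly c n z.
Proof.
  rewrite !partial_poly_csum. apply csum_ext; intros j Hj.
  unfold trunc. destruct (Nat.leb_spec j n); [reflexivity|lia].
Qed.

Lemma partial_poly_recip n c t :
  partial_poly (recip n c) n (expi t) = (expi t ^ n * Cconj (partial_poly c n (expi t)))%C.
Proof.
  rewrite !partial_poly_csum, csum_conj, <- csum_mul_l, csum_reflect.
  apply csum_ext; intros j Hj. unfold recip.
  destruct (Nat.leb_spec (S n - S j) n); [|lia].
  replace (n - (S n - S j))%nat with j by lia.
  rewrite Cmult_conj, Cpow_conj, expi_conj, !expi_pow.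
  transitivity (Cconj (c j) * (expi (INR n * t) * expi (INR j * - t)))%C; [|ring].
  rewrite expi_add. do 2 f_equal. rewrite minus_INR, !S_INR by lia. ring.
Qed.

Lemma Cmod_partial_poly_recip n c t :
  Cmod (partial_poly (recip n c) n (expi t)) = Cmod (partial_poly c n (expi t)).
Proof.
  rewrite partial_poly_recip, Cmod_mult, Cmod_pow, Cmod_expi, Cmod_conj, pow1. ring.
Qed.

(** * Correlations *)

Definition xcorr (d c : nat -> C) (k m : nat) : C :=
  csum (S m) (fun i => if (k <=? i)%nat then d i * Cconj (c (i - k)%nat) else RtoC 0)%C.

Definition acorr (c : nat -> C) : nat -> nat -> C := xcorr c c.

Lemma xcorr_lag_gt d c k m : (m < k)%nat -> xcorr d c k m = RtoC 0.
Proof.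
  intros H. apply csum_eq0; intros i Hi.
  destruct (Nat.leb_spec k i); [lia|reflexivity].
Qed.

Lemma conv_trunc_recip_add n d c k :
  conv (trunc n d) (recip n c) (n + k) = xcorr d c k n.
Proof.
  unfold conv, xcorr.
  rewrite (csum_tail (S n) (S (n + k))) by
    (lia || (intros i Hi; rewrite trunc_above by lia; apply Cmult_0_l)).
  apply csum_ext; intros i Hi. unfold trunc, recip.
  destruct (Nat.leb_spec i n); [|lia].
  destruct (Nat.leb_spec (n + k - i) n), (Nat.leb_spec k i); try lia.
  - do 3 f_equal. lia.
  - apply Cmult_0_r.
Qed.

Lemma conv_trunc_recip_sub n d c k : (k <= n)%nat ->
  conv (trunc n d) (recip n c) (n - k) = Cconj (xcorr c d k n).
Proof.
  intros Hk. unfold conv, xcorr.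
  replace (S n) with (k + S (n - k))%nat by lia.
  rewrite csum_split, (csum_eq0 k), Cplus_0_l, csum_conj.
  - apply csum_ext; intros i Hi. unfold trunc, recip.
    destruct (Nat.leb_spec i n), (Nat.leb_spec (n - k - i) n), (Nat.leb_spec k (k + i));
      try lia.
    rewrite Cmult_conj, Cconj_conj, Cmult_comm.
    replace (n - (n - k - i))%nat with (k + i)%nat by lia.
    replace (k + i - k)%nat with i by lia. reflexivity.
  - intros i Hi. destruct (Nat.leb_spec k i); [lia|reflexivity].
Qed.

Lemma csum_affine_abel (alpha beta : R) x n :
  csum (S n) (fun i => RtoC (alpha + beta * INR i) * x i)%C =
  (RtoC (alpha + beta * INR n) * csum (S n) x - RtoC beta * csum n (fun m => csum (S m) x))%C.
Proof.
  induction n as [|n IH].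
  - simpl. apply injective_projections; simpl; ring.
  - rewrite csum_S, IH, (csum_S n (fun m => csum (S m) x)), (csum_S (S n) x), S_INR.
    apply injective_projections; simpl; ring.
Qed.

Lemma Cmod_abel_sqr_le (g : R) X n Y :
  Cmod (RtoC g * X - RtoC 2 * csum n Y) ^ 2 <=
  2 * g ^ 2 * Cmod X ^ 2 + 8 * INR n * rsum n (fun m => Cmod (Y m) ^ 2).
Proof.
  replace (RtoC g * X - RtoC 2 * csum n Y)%C with (RtoC g * X + RtoC (-2) * csum n Y)%C
    by (apply injective_projections; simpl; ring).
  eapply Rle_trans; [apply Cmod_add_sqr_le|].
  rewrite !Cmod_sqr_RtoC_mul. assert (Hsum := Cmod_csum_sqr_le n Y). nra.
Qed.

Lemma Cmod_affine_acorr_sqr_le c n k alpha : (alpha + 2 * INR n) ^ 2 <= INR n ^ 2 ->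
  Cmod (csum (S n) (fun i =>
    RtoC (alpha + 2 * INR i) *
    (if (k <=? i)%nat then c i * Cconj (c (i - k)%nat) else RtoC 0)))%C ^ 2 <=
  2 * INR n ^ 2 * Cmod (acorr c k n) ^ 2 +
  8 * INR n * rsum n (fun m => Cmod (acorr c k m) ^ 2).
Proof.
  intros Hg. rewrite csum_affine_abel.
  eapply Rle_trans; [apply Cmod_abel_sqr_le|].
  assert (0 <= Cmod (acorr c k n) ^ 2) by apply pow2_ge_0.
  unfold acorr, xcorr. nra.
Qed.

(** * Energy estimates *)

(* Coefficients of 2 z P' - n P. *)
Definition centred n (c : nat -> C) (i : nat) : C := (RtoC (2 * INR i - INR n) * c i)%C.

Definition sidelobe_energy (c : nat -> C) (m : nat) : R :=
  rsum m (fun k => Cmod (acorr c (S k) m) ^ 2).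

Lemma Cmod_xcorr_centred_l_sqr_le n c k :
  Cmod (xcorr (centred n c) c k n) ^ 2 <=
  2 * INR n ^ 2 * Cmod (acorr c k n) ^ 2 +
  8 * INR n * rsum n (fun m => Cmod (acorr c k m) ^ 2).
Proof.
  unfold xcorr at 1.
  erewrite csum_ext; [apply (Cmod_affine_acorr_sqr_le c n k (- INR n)); nra|].
  intros i _. unfold centred.
  destruct (Nat.leb_spec k i); apply injective_projections; simpl; ring.
Qed.

Lemma Cmod_xcorr_centred_r_sqr_le n c k : (k <= n)%nat ->
  Cmod (xcorr c (centred n c) k n) ^ 2 <=
  2 * INR n ^ 2 * Cmod (acorr c k n) ^ 2 +
  8 * INR n * rsum n (fun m => Cmod (acorr c k m) ^ 2).
Proof.
  intros Hk. unfold xcorr at 1.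
  assert (0 <= INR k <= INR n) by (split; [apply pos_INR|apply le_INR; lia]).
  erewrite csum_ext; [apply (Cmod_affine_acorr_sqr_le c n k (- INR n - 2 * INR k)); nra|].
  intros i _. unfold centred.
  destruct (Nat.leb_spec k i); [rewrite minus_INR by lia|];
    apply injective_projections; simpl; ring.
Qed.

Lemma rsum_lags_abel_bound c n :
  rsum n (fun k => 2 * INR n ^ 2 * Cmod (acorr c (S k) n) ^ 2 +
                   8 * INR n * rsum n (fun m => Cmod (acorr c (S k) m) ^ 2)) =
  2 * INR n ^ 2 * sidelobe_energy c n + 8 * INR n * rsum n (sidelobe_energy c).
Proof.
  rewrite rsum_add, !rsum_mul_l, rsum_swap. unfold sidelobe_energy. do 2 f_equal.
  apply rsum_ext; intros m Hm. apply rsum_tail; [lia|].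
  intros k Hk. unfold acorr. rewrite xcorr_lag_gt, Cmod_0 by lia. ring.
Qed.

Lemma rsum_centred_weight n : rsum (S n) (fun i => 2 * INR i - INR n) = 0.
Proof.
  rewrite (rsum_ext _ _ (fun i => 2 * INR i + - INR n)) by (intros; ring).
  rewrite rsum_add, rsum_mul_l, rsum_const, rsum_INR, S_INR. field.
Qed.

Lemma rsum_centred_weight_sqr n :
  rsum (S n) (fun i => (2 * INR i - INR n) ^ 2) = INR n * (INR n + 1) * (INR n + 2) / 3.
Proof.
  rewrite (rsum_ext _ _ (fun i => 4 * INR i ^ 2 + (- 4 * INR n * INR i + INR n ^ 2)))
    by (intros; ring).
  rewrite !rsum_add, !rsum_mul_l, rsum_const, rsum_INR, rsum_INR_sqr, S_INR. field.
Qed.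

Lemma sqr_mul_sqrt_INR x n : (x * sqrt (INR n)) ^ 2 = x ^ 2 * INR n.
Proof. rewrite Rpow_mult_distr, pow2_sqrt by apply pos_INR. reflexivity. Qed.

Section Unimodular.

Variable a : nat -> C.
Hypothesis a_unimodular : forall j, Cmod (a j) = 1.

Lemma acorr_lag0 n : acorr a 0 n = RtoC (INR (S n)).
Proof.
  unfold acorr, xcorr. rewrite (csum_ext _ _ (fun _ => RtoC 1)).
  - now rewrite csum_RtoC, rsum_const, Rmult_1_r.
  - intros i _. rewrite Nat.sub_0_r, <- Cmod2_conj, a_unimodular.
    apply injective_projections; simpl; ring.
Qed.

Lemma xcorr_centred_lag0 n : xcorr (centred n a) a 0 n = RtoC 0.
Proof.
  unfold xcorr.
  rewrite (csum_ext _ _ (fun i => RtoC (2 * INR i - INR n))).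
  - now rewrite csum_RtoC, rsum_centred_weight.
  - intros i _. rewrite Nat.sub_0_r. unfold centred.
    rewrite <- Cmult_assoc, <- Cmod2_conj, a_unimodular.
    apply injective_projections; simpl; ring.
Qed.

Lemma centred_conv_energy_le n :
  rsum (S (n + n)) (fun l => Cmod (conv (trunc n (centred n a)) (recip n a) l) ^ 2) <=
  4 * INR n ^ 2 * sidelobe_energy a n + 16 * INR n * rsum n (sidelobe_energy a).
Proof.
  set (F l := conv (trunc n (centred n a)) (recip n a) l).
  set (budget k := 2 * INR n ^ 2 * Cmod (acorr a (S k) n) ^ 2 +
                   8 * INR n * rsum n (fun m => Cmod (acorr a (S k) m) ^ 2)).
  assert (Hlow : rsum n (fun l => Cmod (F l) ^ 2) <= rsum n budget).
  { rewrite rsum_reflect. apply rsum_le; intros k Hk.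
    unfold F. rewrite conv_trunc_recip_sub, Cmod_conj by lia.
    apply Cmod_xcorr_centred_r_sqr_le. lia. }
  assert (Hmid : F n = RtoC 0).
  { assert (H0 := conv_trunc_recip_add n (centred n a) a 0).
    rewrite Nat.add_0_r in H0. unfold F. rewrite H0. apply xcorr_centred_lag0. }
  assert (Hhigh : rsum n (fun k => Cmod (F (n + S k)%nat) ^ 2) <= rsum n budget).
  { apply rsum_le; intros k Hk.
    unfold F. rewrite conv_trunc_recip_add. apply Cmod_xcorr_centred_l_sqr_le. }
  assert (Hbudget := rsum_lags_abel_bound a n). fold budget in Hbudget.
  rewrite rsum_split_mid, Hmid, Cmod_0. lra.
Qed.

Lemma sidelobe_energy_le_flat n M : (forall t, Cmod (partial_poly a n (expi t)) <= M) ->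
  INR (S n) ^ 2 + sidelobe_energy a n <= M ^ 4.
Proof.
  intros Hflat. set (N := S (n + n)).
  assert (HN : 0 < INR N) by (apply lt_0_INR; lia).
  set (F l := conv (trunc n a) (recip n a) l).
  assert (Henergy : INR N * rsum N (fun l => Cmod (F l) ^ 2) <= INR N * M ^ 4).
  { unfold F, N. rewrite conv_energy by (apply trunc_above || apply recip_above).
    rewrite <- rsum_const. apply rsum_le; intros s _.
    unfold unity_root. rewrite partial_poly_trunc, Cmod_partial_poly_recip.
    assert (0 <= Cmod (partial_poly a n (expi (2 * PI * INR s / INR (S (n + n))))))
      by apply Cmod_ge_0.
    specialize (Hflat (2 * PI * INR s / INR (S (n + n)))).
    replace (M ^ 4) with ((M * M) ^ 2) by ring.
    apply pow_incr. split; [nra|]. apply Rmult_le_compat; lra. }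
  apply Rmult_le_reg_l in Henergy; [|exact HN].
  assert (Hmid : F n = RtoC (INR (S n))).
  { assert (H0 := conv_trunc_recip_add n a a 0).
    rewrite Nat.add_0_r in H0. unfold F. rewrite H0. apply acorr_lag0. }
  assert (Hhigh : rsum n (fun k => Cmod (F (n + S k)%nat) ^ 2) = sidelobe_energy a n).
  { apply rsum_ext; intros k _. unfold F. now rewrite conv_trunc_recip_add. }
  assert (0 <= rsum n (fun l => Cmod (F l) ^ 2))
    by (apply rsum_ge0; intros; apply pow2_ge_0).
  unfold N in Henergy. rewrite rsum_split_mid, Hmid, Hhigh, Cmod_R, pow2_abs in Henergy.
  lra.
Qed.

Lemma centred_conv_energy_ge n L : 0 <= L ->
  (forall t, L <= Cmod (partial_poly a n (expi t))) ->
  L ^ 2 * (INR n * (INR n + 1) * (INR n + 2) / 3) <=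
  rsum (S (n + n)) (fun l => Cmod (conv (trunc n (centred n a)) (recip n a) l) ^ 2).
Proof.
  intros HL Hflat. set (N := S (n + n)).
  assert (HN : 0 < INR N) by (apply lt_0_INR; lia).
  set (Fz z := partial_poly (trunc n (centred n a)) n z).
  assert (Hcoef : rsum (S n) (fun l => Cmod (trunc n (centred n a) l) ^ 2) =
                  INR n * (INR n + 1) * (INR n + 2) / 3).
  { rewrite <- rsum_centred_weight_sqr. apply rsum_ext; intros l Hl.
    unfold trunc, centred. destruct (Nat.leb_spec l n); [|lia].
    now rewrite Cmod_sqr_RtoC_mul, a_unimodular, pow1, Rmult_1_r. }
  assert (Hparseval : rsum N (fun s => Cmod (Fz (unity_root N s)) ^ 2) =
                      INR N * (INR n * (INR n + 1) * (INR n + 2) / 3)).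
  { unfold Fz. rewrite partial_poly_parseval by (unfold N; lia || apply trunc_above).
    now rewrite Hcoef. }
  apply Rmult_le_reg_l with (INR N); [exact HN|].
  unfold N. rewrite conv_energy by (apply trunc_above || apply recip_above). fold N.
  rewrite Rmult_comm, Rmult_assoc, (Rmult_comm _ (INR N)), <- Hparseval, <- rsum_mul_l.
  apply rsum_le; intros s _. fold (Fz (unity_root N s)).
  unfold unity_root. rewrite Cmod_partial_poly_recip.
  set (t := 2 * PI * INR s / INR N).
  assert (HLt := Hflat t). assert (0 <= Cmod (Fz (expi t))) by apply Cmod_ge_0.
  rewrite Rpow_mult_distr, Rmult_comm.
  apply Rmult_le_compat_l; [apply pow2_ge_0|]. apply pow_incr. lra.
Qed.

Lemma sidelobe_energy_le_eps_flat n eps : eps_flat n (partial_poly a n) eps ->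
  sidelobe_energy a n <= ((1 + eps) ^ 4 - 1) * INR (S n) ^ 2.
Proof.
  intros Hflat. unfold eps_flat in Hflat. setoid_rewrite Nat.add_1_r in Hflat.
  assert (Hle := sidelobe_energy_le_flat n _ (fun t => proj2 (Hflat t))).
  replace (((1 + eps) * sqrt (INR (S n))) ^ 4)
    with ((((1 + eps) * sqrt (INR (S n))) ^ 2) ^ 2) in Hle by ring.
  rewrite sqr_mul_sqrt_INR in Hle. lra.
Qed.

Lemma eps_flat_energy_inequality n eps : eps <= 1 -> eps_flat n (partial_poly a n) eps ->
  (1 - eps) ^ 2 * INR (S n) * (INR n * (INR n + 1) * (INR n + 2) / 3) <=
  4 * INR n ^ 2 * sidelobe_energy a n + 16 * INR n * rsum n (sidelobe_energy a).
Proof.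
  intros Heps Hflat. unfold eps_flat in Hflat. setoid_rewrite Nat.add_1_r in Hflat.
  eapply Rle_trans; [|apply centred_conv_energy_le].
  rewrite <- sqr_mul_sqrt_INR. apply centred_conv_energy_ge.
  - apply Rmult_le_pos; [lra|apply sqrt_pos].
  - intros t. apply Hflat.
Qed.

End Unimodular.

(** * Asymptotics *)

Lemma rsum_le_of_tail_bound (E : nat -> R) M n (delta : R) : 0 <= delta -> (M <= n)%nat ->
  (forall m, (M <= m)%nat -> E m <= delta * INR (S m) ^ 2) ->
  rsum n E <= rsum M E + INR n * (delta * INR (S n) ^ 2).
Proof.
  intros Hdelta HMn Htail. replace n with (M + (n - M))%nat at 1 by lia.
  rewrite rsum_split. apply Rplus_le_compat_l.
  eapply Rle_trans; [apply (rsum_le _ _ (fun _ => delta * INR (S n) ^ 2))|].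
  - intros i Hi. eapply Rle_trans; [apply Htail; lia|].
    apply Rmult_le_compat_l; [exact Hdelta|].
    apply pow_incr. split; [apply pos_INR|apply le_INR; lia].
  - rewrite rsum_const. apply Rmult_le_compat_r.
    + apply Rmult_le_pos; [exact Hdelta|apply pow2_ge_0].
    + apply le_INR; lia.
Qed.

(* Once |e m| <= 1/1000 we have E m <= (m+1)^2 / 200, so the left side is at most
   n^2 (n+1)^2 / 10 + O(n), against roughly n^4 / 3 on the right. *)
Lemma energy_inequality_eventually_fails (e E : nat -> R) :
  is_lim_seq e 0 ->
  (forall m, 0 <= E m <= ((1 + e m) ^ 4 - 1) * INR (S m) ^ 2) ->
  eventually (fun n =>
    4 * INR n ^ 2 * E n + 16 * INR n * rsum n E <
    (1 - e n) ^ 2 * INR (S n) * (INR n * (INR n + 1) * (INR n + 2) / 3)).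
Proof.
  intros He HE. apply is_lim_seq_spec in He.
  destruct (He (mkposreal (1 / 1000) ltac:(lra))) as [M HM]; simpl in HM.
  assert (Hsmall : forall m, (M <= m)%nat -> - (1 / 1000) <= e m <= 1 / 1000).
  { intros m Hm. specialize (HM m Hm). rewrite Rminus_0_r in HM.
    apply Rabs_def2 in HM. lra. }
  assert (Htail : forall m, (M <= m)%nat -> E m <= 1 / 200 * INR (S m) ^ 2).
  { intros m Hm. destruct (HE m) as [_ HEm]. eapply Rle_trans; [exact HEm|].
    apply Rmult_le_compat_r; [apply pow2_ge_0|].
    destruct (Hsmall m Hm). assert (0 <= 1 + e m) by lra.
    assert ((1 + e m) ^ 2 <= 1.002001) by nra. nra. }
  set (C0 := rsum M E).
  assert (HC0 : 0 <= C0) by (apply rsum_ge0; intros; apply HE).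
  destruct (INR_unbounded (100 * C0)) as [K HK].
  exists (M + S K)%nat. intros n Hn.
  assert (Hsum := rsum_le_of_tail_bound E M n (1 / 200) ltac:(lra) ltac:(lia) Htail).
  fold C0 in Hsum.
  assert (HEn := Htail n ltac:(lia)). destruct (Hsmall n ltac:(lia)) as [Hen1 Hen2].
  assert (HKn : INR K + 1 <= INR n) by (rewrite <- S_INR; apply le_INR; lia).
  rewrite S_INR in *. set (r := INR n) in *.
  assert (Hr : 1 <= r) by (assert (0 <= INR K) by apply pos_INR; lra).
  set (X := r ^ 2 * (r + 1) ^ 2).
  assert (HX : 1 <= X) by (unfold X; nra).
  assert (Hlhs : (998 / 1000) * X / 3 <=
                 (1 - e n) ^ 2 * (r + 1) * (r * (r + 1) * (r + 2) / 3)).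
  { assert (Hweight : X <= (r + 1) * (r * (r + 1) * (r + 2))) by (unfold X; nra).
    assert (998 / 1000 <= (1 - e n) ^ 2) by nra. nra. }
  assert (Hrhs : 4 * r ^ 2 * E n + 16 * r * rsum n E <=
                 (1 / 10) * X + 16 * r * C0).
  { assert (0 <= r) by lra. unfold X. nra. }
  assert (16 * r * C0 < 16 / 100 * X) by (unfold X; nra).
  lra.
Qed.

Theorem theorem2p1 (a : nat -> C) (ha : forall j, Cmod (a j) = 1) :
  ~ ultraflat (fun n => partial_poly a n).
Proof.
  intros [e [_ [e_lim e_flat]]].
  assert (Hbudget : forall m,
    0 <= sidelobe_energy a m <= ((1 + e m) ^ 4 - 1) * INR (S m) ^ 2).
  { intros m. split.
    - apply rsum_ge0; intros; apply pow2_ge_0.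
    - apply sidelobe_energy_le_eps_flat; auto. }
  assert (Hsmall : eventually (fun n => e n <= 1)).
  { apply is_lim_seq_spec in e_lim. destruct (e_lim (mkposreal 1 Rlt_0_1)) as [M HM].
    exists M. intros n Hn. specialize (HM n Hn). simpl in HM.
    rewrite Rminus_0_r in HM. apply Rabs_def2 in HM. lra. }
  destruct (filter_and _ _ Hsmall (energy_inequality_eventually_fails e _ e_lim Hbudget))
    as [n Hn].
  destruct (Hn n (Nat.le_refl n)) as [Hen Hfails].
  apply (Rlt_not_le _ _ Hfails), eps_flat_energy_inequality; auto.
Qed.
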